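(* There exists a hereditary subshift $X\subseteq\{0,1\}^{\mathbb{N}}$ whose factor complexity is sublinear (the number of words of length $n$ in its language is $\mathcal{O}(n)$) and which has infinite coding dimension.
   Context: Subshift: closed shift-invariant subset of $\{0,1\}^{\mathbb{N}}$. $X$ is hereditary if whenever $\mathbf{y}\in X$ and $\mathbf{x}\le\mathbf{y}$ coordinatewise (with $0<1$), then $\mathbf{x}\in X$. Infinite coding dimension means there is no $d\in\mathbb{N}$ with $\sum_i x_i\le d$ for all $\mathbf{x}\in X$. *)

From mathcomp Require Import all_boot.
From mathcomp Require Import boolp.
Set Implicit Arguments. Unset Strict Implicit. Unset Printing Implicit Defensive.

(* One-sided binary sequences {0,1}^N, encoded as nat -> bool (false = 0, true = 1). *)
Definition bseq := nat -> bool.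
Definition shiftspace := bseq -> Prop.

(* Closedness in the product (Cantor) topology: a point all of whose cylinder
   neighbourhoods [x_0 ... x_{n-1}] meet X belongs to X. *)
Definition cantor_closed (X : shiftspace) : Prop :=
  forall x : bseq,
    (forall n, exists y, X y /\ forall i, i < n -> y i = x i) -> X x.

Definition shift (x : bseq) : bseq := fun i => x i.+1.

Definition shift_invariant (X : shiftspace) : Prop :=
  forall x, X x -> X (shift x).

Definition subshift (X : shiftspace) : Prop :=
  cantor_closed X /\ shift_invariant X.

(* Coordinatewise order with 0 < 1. *)
Definition hereditary (X : shiftspace) : Prop :=
  forall x y : bseq, X y -> (forall i, x i <= y i) -> X x.

Definition in_language (X : shiftspace) (n : nat) (w : n.-tuple bool) : Prop :=
  exists x, X x /\ exists k, forall i : 'I_n, tnth w i = x (k + i).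

Definition complexity (X : shiftspace) (n : nat) : nat :=
  #|[set w : n.-tuple bool | `[< in_language X w >]]|.

Definition sublinear_complexity (X : shiftspace) : Prop :=
  exists C : nat, forall n, 0 < n -> complexity X n <= C * n.

Definition infinite_coding_dimension (X : shiftspace) : Prop :=
  ~ exists d : nat, forall x, X x -> forall N, \sum_(i < N) (x i : nat) <= d.

From mathcomp Require Import all_boot.
From mathcomp Require Import boolp.
From mathcomp Require Import zify.

(* For a set P of natural numbers, let X_P be the set of binary
   sequences x such that every finite prefix of x, suitably shifted, has its
   ones inside P.  For every P, X_P is closed, shift invariant and hereditary;
   it contains the indicator of P, hence has infinite coding dimension as soon
   as P is infinite.
   We take P = {pos 0 < pos 1 < ...} with super-exponentially growing gaps
   gap k = pos (k+1) - pos k = 2^(k+3) (pos k + 1).  A word of length n in the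
   language of X_P is a subword of a window of length n of the indicator of P.
   If it has at most one 1 there are n+1 possibilities; if it has two ones, the
   window contains two points of P at distance < n, which forces the window to
   start before pos D, where D = scale n is the last index with gap D < n, and
   to meet only the points pos 0, ..., pos (D+1).  Such a word is determined by
   its starting point and a subset of {0, ..., D+1}, at most
   (pos D + 1) 2^(D+2) <= n + 4 choices.  Hence the complexity is <= 7 n. *)

Section HereditaryClosure.

Variable P : pred nat.

(* The hereditary subshift generated by the indicator of P. *)
Definition hered_closure : shiftspace :=
  fun x => forall n, exists s, forall i, i < n -> x i -> P (i + s).

Lemma hered_closure_subshift : subshift hered_closure.
Proof.
split.
- move=> x near_x n; have [y [Xy y_eq]] := near_x n; have [s Hs] := Xy n.
  by exists s => i lt_in xi; apply: Hs; rewrite ?y_eq.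
- move=> x Xx n; have [s Hs] := Xx n.+1.
  by exists s.+1 => i lt_in xi; rewrite addnS -addSn; apply: Hs.
Qed.

Lemma hered_closure_hereditary : hereditary hered_closure.
Proof.
move=> x y Xy le_xy n; have [s Hs] := Xy n.
exists s => i lt_in xi; apply: Hs => //.
by have := le_xy i; rewrite xi; case: (y i).
Qed.

Lemma indicator_in_hered_closure : hered_closure P.
Proof. by move=> n; exists 0 => i _; rewrite addn0. Qed.

Lemma hered_closure_icd :
  (forall d, exists N, d < \sum_(i < N) (P i : nat)) ->
  infinite_coding_dimension hered_closure.
Proof.
move=> P_large [d bounded]; have [N gt_d] := P_large d.
by have := bounded _ indicator_in_hered_closure N; rewrite leqNgt gt_d.
Qed.

Lemma hered_closure_language {n} (w : n.-tuple bool) :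
  in_language hered_closure w ->
  exists t, forall i : 'I_n, tnth w i -> P (t + i).
Proof.
move=> [x [Xx [k w_eq]]]; have [s Hs] := Xx (k + n).
exists (k + s) => i wi.
have -> : k + s + i = k + i + s by lia.
by apply: Hs; rewrite -?w_eq // ltn_add2l.
Qed.

End HereditaryClosure.

Fixpoint pos (k : nat) : nat :=
  if k is k'.+1 then pos k' + 2 ^ k'.+3 * (pos k' + 1) else 0.

Definition gap (k : nat) : nat := 2 ^ k.+3 * (pos k + 1).

Lemma posS k : pos k.+1 = pos k + gap k. Proof. by []. Qed.

Lemma gap_gt k : k < gap k.
Proof.
have lt_k_exp : k < 2 ^ k.+3 by have := ltn_expl k (isT : 1 < 2); rewrite !expnS; lia.
by apply: (leq_trans lt_k_exp); rewrite /gap leq_pmulr ?addn1.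
Qed.

Lemma pos_monotone a c : a <= c -> pos a <= pos c.
Proof. by move=> /subnK <-; elim: (c - a) => [|m IH] //; rewrite addSn posS; lia. Qed.

Lemma pos_gap a c : a < c -> pos a + gap a <= pos c.
Proof. by move=> lt_ac; rewrite -posS; apply: pos_monotone. Qed.

Lemma pos_ge k : k <= pos k.
Proof. by elim: k => [|k IH] //; rewrite posS; have := gap_gt k; lia. Qed.

Definition in_pos (m : nat) : bool := [exists k : 'I_m.+1, pos k == m].

Lemma in_posP m : reflect (exists k, pos k = m) (in_pos m).
Proof.
apply: (iffP existsP) => [[k /eqP <-]|[k pos_k]]; first by exists k.
have lt_k : k < m.+1 by rewrite ltnS -pos_k pos_ge.
by exists (Ordinal lt_k); rewrite /= pos_k.
Qed.

Lemma in_pos_count d : d < \sum_(i < (pos d).+1) (in_pos i : nat).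
Proof.
elim: d => [|d IH].
  by rewrite big_ord_recl /=; have -> : in_pos 0 by apply/in_posP; exists 0.
rewrite -!(big_mkord xpredT (fun i => (in_pos i : nat))) in IH *.
have := @pos_gap d d.+1 (ltnSn d); have := gap_gt d => gap_ge gap_le.
rewrite (@big_cat_nat _ _ _ (pos d).+1) //=; last by lia.
rewrite (@big_nat_recr _ _ _ (pos d.+1) (pos d).+1) /=; last by lia.
have -> : in_pos (pos d.+1) by apply/in_posP; exists d.+1.
lia.
Qed.

(* scale n: the largest index d < n whose gap is shorter than n (or 0). *)
Definition scale (n : nat) : nat := \max_(d < n | gap d < n) (d : nat).

Lemma scale_max n d : gap d < n -> d <= scale n.
Proof.
move=> gap_lt; have lt_dn : d < n by have := gap_gt d; lia.
exact: (@leq_bigmax_cond _ (fun d : 'I_n => gap d < n)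
          (fun d : 'I_n => (d : nat)) (Ordinal lt_dn)).
Qed.

Lemma scale_gap n : scale n = 0 \/ gap (scale n) < n.
Proof.
apply: (big_ind (fun m => m = 0 \/ gap m < n)); first by left.
- by move=> x y hx hy; rewrite /maxn; case: (x < y).
- by move=> i gap_lt; right.
Qed.

Lemma gap_scale_succ n : n <= gap (scale n).+1.
Proof. by rewrite leqNgt; apply/negP => /scale_max; rewrite ltnn. Qed.

Lemma window_two_points n t a c :
  a < c -> t <= pos a -> pos c < t + n ->
  t <= pos (scale n) /\ forall e, pos e < t + n -> e < (scale n).+2.
Proof.
move=> lt_ac t_le pos_c_lt.
have pos_a_le : pos a <= pos c.-1 by apply: pos_monotone; lia.
have c_le_scale : c.-1 <= scale n.
  by apply: scale_max; have := @pos_gap c.-1 c ltac:(lia); lia.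
have pos_scale := @pos_monotone _ _ c_le_scale.
split; first by lia.
move=> e pos_e_lt; rewrite ltnNge; apply/negP => big_e.
have := @pos_gap (scale n).+1 e big_e; have := gap_scale_succ n.
have := @pos_monotone c.-1 (scale n).+1 ltac:(lia); lia.
Qed.

Definition sparse_word n (o : option 'I_n) : n.-tuple bool :=
  [tuple (if o is Some b then i == b else false) | i < n].

(* Words of length n read from the window at offset t of the indicator of
   the points pos e, e in a subset S of {0, ..., scale n + 1}. *)
Definition window_word n
    (q : 'I_(pos (scale n)).+1 * {ffun 'I_(scale n).+2 -> bool}) :
    n.-tuple bool :=
  [tuple [exists e : 'I_(scale n).+2, q.2 e && (pos e == q.1 + i)] | i < n].

Definition two_ones {n} (w : n.-tuple bool) : bool :=
  [exists i : 'I_n, exists j : 'I_n, [&& i < j, tnth w i & tnth w j]].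

Lemma sparse_word_cover n (w : n.-tuple bool) :
  ~~ two_ones w -> w \in sparse_word n @: setT.
Proof.
rewrite negb_exists => /forallP no_pair; apply/imsetP.
have not_both (i j : 'I_n) : i < j -> tnth w i -> tnth w j -> False.
  move=> lt_ij wi wj; move: (no_pair i); rewrite negb_exists => /forallP.
  by move=> /(_ j); rewrite lt_ij wi wj.
case: (boolP [exists b : 'I_n, tnth w b]) => [/existsP [b wb]|].
- exists (Some b); first by rewrite inE.
  apply: eq_from_tnth => i; rewrite tnth_mktuple.
  case: (eqVneq i b) => [->|ne_ib] //; apply/negP => wi.
  by move: ne_ib; rewrite neq_ltn => /orP [lt_ib|lt_bi];
    [apply: (not_both i b) | apply: (not_both b i)].
- rewrite negb_exists => /forallP all_false; exists None; first by rewrite inE.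
  by apply: eq_from_tnth => i; rewrite tnth_mktuple; apply/negbTE/all_false.
Qed.

Lemma dense_word_cover n (w : n.-tuple bool) :
  in_language (hered_closure in_pos) w -> two_ones w ->
  w \in window_word n @: setT.
Proof.
move=> /hered_closure_language [t on_pos].
have pos_of i : tnth w i -> exists e, pos e = t + i by move/on_pos/in_posP.
move=> /existsP [i /existsP [j /and3P [lt_ij wi wj]]].
have [a pos_a] := pos_of i wi; have [c pos_c] := pos_of j wj.
have lt_ac : a < c.
  by rewrite ltnNge; apply/negP => /pos_monotone; lia.
have [t_le only_small] : t <= pos (scale n) /\
    forall e, pos e < t + n -> e < (scale n).+2.
  by apply: (@window_two_points n t a c lt_ac); have := ltn_ord j; lia.
pose S := [ffun e : 'I_(scale n).+2 =>
             [exists i' : 'I_n, tnth w i' && (pos e == t + i')]].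
have lt_t : t < (pos (scale n)).+1 by [].
apply/imsetP; exists (Ordinal lt_t, S); first by rewrite inE.
apply: eq_from_tnth => k; rewrite tnth_mktuple /=; symmetry.
case wk: (tnth w k).
- have [e pos_e] := pos_of k wk.
  have small_e : e < (scale n).+2 by apply: only_small; have := ltn_ord k; lia.
  apply/existsP; exists (Ordinal small_e); rewrite ffunE /= pos_e eqxx andbT.
  by apply/existsP; exists k; rewrite wk eqxx.
- apply/negbTE/negP => /existsP [e /andP [Se /eqP pos_e]].
  rewrite ffunE in Se; move/existsP: Se => [k' /andP [wk' /eqP pos_e']].
  have eq_k : k' = k by apply: val_inj; rewrite /=; lia.
  by rewrite eq_k wk in wk'.
Qed.

Lemma card_sparse_words n : #|sparse_word n @: setT| <= n.+1.
Proof.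
apply: leq_trans (leq_imset_card _ _) _.
by rewrite cardsT card_option card_ord.
Qed.

Lemma card_window_words n : #|window_word n @: setT| <= n + 4.
Proof.
apply: leq_trans (leq_imset_card _ _) _.
rewrite cardsT card_prod card_ffun card_bool !card_ord.
case: (scale_gap n) => [->|]; first by rewrite leq_addl.
by rewrite /gap expnS; lia.
Qed.

Lemma complexity_linear n : 0 < n -> complexity (hered_closure in_pos) n <= 7 * n.
Proof.
move=> n_gt0; rewrite /complexity.
apply: (@leq_trans #|(sparse_word n @: setT) :|: (window_word n @: setT)|).
  apply: subset_leq_card; apply/subsetP => w; rewrite inE => /asboolP w_lang.
  apply/setUP; case: (boolP (two_ones w)) => [w2|w1].
  + by right; apply: dense_word_cover.
  + by left; apply: sparse_word_cover.
rewrite cardsU; apply: leq_trans (leq_subr _ _) _.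
by have := card_sparse_words n; have := card_window_words n; lia.
Qed.

Theorem mainTheorem6 :
  exists X : shiftspace,
    subshift X /\ hereditary X /\ sublinear_complexity X /\ infinite_coding_dimension X.
Proof.
exists (hered_closure in_pos); split; first exact: hered_closure_subshift.
split; first exact: hered_closure_hereditary.
split; first by exists 7; apply: complexity_linear.
by apply: hered_closure_icd => d; exists (pos d).+1; apply: in_pos_count.
Qed.
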